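(* Let $X\subseteq[0,1]^n$ be closed and suppose $X$ has a rationally outgoing $k$-tangent $u$ at $x$, witnessed by a rational simplex $S\subseteq[0,1]^n$, a face $F$ of $S$ and $\lambda\in\mathbb{R}^k_{>0}$ with $C_{x,u,\lambda}\subseteq S$, $C_{x,u,\lambda}\not\subseteq F$, $F\cap X=S\cap X$. Let $f,g\in\mathcal{M}([0,1]^n)$ satisfy $f^{-1}(0)=F$ and $g^{-1}(0)=S$. Then $f|_X$ and $g|_X$ have the same zero set in $X$ (so $f|_X$ lies in a given maximal ideal of $\mathcal{M}(X)$ iff $g|_X$ does), but $f|_X$ does not belong to the principal ideal of $\mathcal{M}(X)$ generated by $g|_X$; i.e., there is no integer $m>0$ with $f|_X\le m\,g|_X$. Consequently $\mathcal{M}(X)$ is not strongly semisimple.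
   Context: $\mathcal{M}([0,1]^n)$ denotes the MV-algebra of continuous functions $[0,1]^n\to[0,1]$ that are piecewise affine linear with finitely many pieces having integer coefficients, with pointwise MV-operations; $\mathcal{M}(X)$ is the MV-algebra of their restrictions to $X$. The principal ideal generated by $a$ is $\{b\mid b\le ma\text{ for some integer }m>0\}$ ($ma$ is the $m$-fold truncated sum). Maximal ideals of $\mathcal{M}(X)$ are exactly $\{h\mid h(y)=0\}$, $y\in X$. Strong semisimplicity: every principal ideal is an intersection of maximal ideals. $k$-tangents: For pairwise orthogonal unit vectors $u=(u_1,\ldots,u_k)$ in $\mathbb{R}^n$, $\mathsf p_l$ the orthogonal projection onto $\mathbb{R}u_1+\cdots+\mathbb{R}u_l$ ($\mathsf p_0=0$), $u$ is a $k$-tangent of $X$ at $x$ if there is a sequence $x_i\in X$, $x_i\to x$, with $x_i-x\notin\mathbb{R}u_1+\cdots+\mathbb{R}u_k$, and $\lim_i \dfrac{x_i-x-\mathsf{p}_{l-1}(x_i-x)}{\|x_i-x-\mathsf{p}_{l-1}(x_i-x)\|}=u_l$ for $l=1,\ldots,k$. $C_{x,u,\lambda}=\mathrm{conv}(x,\,x+\lambda_1u_1,\,\ldots,\,x+\lambda_1u_1+\cdots+\lambda_ku_k)$. Rationally outgoing: there exist a rational simplex $S$, a face $F$ of $S$, and $\lambda\in\mathbb{R}^k_{>0}$ with $C_{x,u,\lambda}\subseteq S$, $C_{x,u,\lambda}\not\subseteq F$, $F\cap X=S\cap X$. *)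

From mathcomp Require Import all_boot.
From Stdlib Require Import Reals.

Set Implicit Arguments.
Unset Strict Implicit.
Unset Printing Implicit Defensive.

Open Scope R_scope.

Definition vec (n : nat) := 'I_n -> R.

Definition sumI (m : nat) (c : 'I_m -> R) : R :=
  foldr Rplus 0 (map c (enum 'I_m)).

Definition vadd n (a b : vec n) : vec n := fun i => a i + b i.
Definition vsub n (a b : vec n) : vec n := fun i => a i - b i.
Definition vscale n (r : R) (a : vec n) : vec n := fun i => r * a i.
Definition vzero n : vec n := fun _ => 0.
Definition dot n (a b : vec n) : R := sumI (fun i => a i * b i).
Definition norm n (a : vec n) : R := sqrt (dot a a).

Definition lincomb n m (c : 'I_m -> R) (P : 'I_m -> vec n) : vec n :=
  fun i => sumI (fun j => c j * P j i).

Definition inCube n (x : vec n) : Prop := forall i, 0 <= x i <= 1.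

Definition vconv n (a : nat -> vec n) (b : vec n) : Prop :=
  Un_cv (fun i => norm (vsub (a i) b)) 0.

Definition vclosed n (X : vec n -> Prop) : Prop :=
  forall (a : nat -> vec n) (b : vec n), (forall i, X (a i)) -> vconv a b -> X b.

Definition conv_on n m (A : 'I_m -> bool) (P : 'I_m -> vec n) : vec n -> Prop :=
  fun y => exists c : 'I_m -> R,
    (forall j, 0 <= c j) /\ (forall j, A j = false -> c j = 0) /\
    sumI c = 1 /\ y = lincomb c P.

Definition conv n m (P : 'I_m -> vec n) : vec n -> Prop :=
  conv_on (fun _ => true) P.

Definition is_rational (r : R) : Prop :=
  exists p q : Z, (0 < q)%Z /\ r = IZR p / IZR q.
Definition rational_pt n (v : vec n) : Prop := forall i, is_rational (v i).

Definition aff_indep n m (V : 'I_m -> vec n) : Prop :=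
  forall c : 'I_m -> R, sumI c = 0 -> lincomb c V = @vzero n -> forall j, c j = 0.

(* V : 'I_d.+1 -> vec n is the vertex family of a rational simplex conv V;
   its faces are conv_on A V for nonempty A. *)
Definition rational_simplex n d (V : 'I_d.+1 -> vec n) : Prop :=
  (forall j, rational_pt (V j)) /\ aff_indep V.

Definition vsubset n (A B : vec n -> Prop) : Prop := forall y, A y -> B y.

Definition orthonormal n k (u : 'I_k -> vec n) : Prop :=
  forall j l, dot (u j) (u l) = if j == l then 1 else 0.

Definition in_span n k (u : 'I_k -> vec n) (y : vec n) : Prop :=
  exists c : 'I_k -> R, y = lincomb c u.

(* orthogonal projection onto R u_1 + ... + R u_l  (0-based: the u_j with j < l),
   for orthonormal u:  p_l(y) = sum_{j<l} <y,u_j> u_j *)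
Definition proj n k (u : 'I_k -> vec n) (l : nat) (y : vec n) : vec n :=
  lincomb (fun j : 'I_k => if ltn (nat_of_ord j) l then dot y (u j) else 0) u.

Definition normalize n (y : vec n) : vec n := vscale (/ norm y) y.

(* u is a k-tangent of X at x.  Index l : 'I_k (0-based) corresponds to the
   paper's l+1, so p_{(l+1)-1} = proj u l. *)
Definition k_tangent n k (X : vec n -> Prop) (u : 'I_k -> vec n) (x : vec n) : Prop :=
  orthonormal u /\
  exists xs : nat -> vec n,
    (forall i, X (xs i)) /\ vconv xs x /\
    (forall i, ~ in_span u (vsub (xs i) x)) /\
    (forall l : 'I_k,
       vconv (fun i => normalize (vsub (vsub (xs i) x) (proj u l (vsub (xs i) x))))
             (u l)).

(* C_{x,u,lambda} = conv(x, x + l_1 u_1, ..., x + l_1 u_1 + ... + l_k u_k) *)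
Definition Cpts n k (x : vec n) (u : 'I_k -> vec n) (lam : 'I_k -> R)
  : 'I_k.+1 -> vec n :=
  fun j => vadd x (lincomb (fun l : 'I_k =>
                              if ltn (nat_of_ord l) (nat_of_ord j) then lam l else 0) u).

Definition Cset n k (x : vec n) (u : 'I_k -> vec n) (lam : 'I_k -> R) : vec n -> Prop :=
  conv (Cpts x u lam).

Definition aff_eval n (p : ('I_n -> Z) * Z) (x : vec n) : R :=
  sumI (fun i => IZR (p.1 i) * x i) + IZR p.2.

(* f : [0,1]^n -> [0,1] continuous, piecewise affine linear with finitely
   many integer-coefficient pieces (values outside the cube are irrelevant). *)
Definition McNaughton n (f : vec n -> R) : Prop :=
  (forall x, inCube x -> 0 <= f x <= 1) /\
  (forall x, inCube x -> forall eps, 0 < eps -> exists delta, 0 < delta /\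
     forall y, inCube y -> norm (vsub y x) < delta -> Rabs (f y - f x) < eps) /\
  (exists ps : list (('I_n -> Z) * Z),
     forall x, inCube x -> exists p, List.In p ps /\ f x = aff_eval p x).

(* truncated sum and m-fold truncated sum in the MV-algebra [0,1] *)
Definition oplus (a b : R) : R := Rmin 1 (a + b).
Fixpoint mvmul (m : nat) (a : R) : R :=
  match m with
  | O => 0
  | S m' => oplus (mvmul m' a) a
  end.

(* Elements of M(X) are the restrictions to X of McNaughton functions;
   h|_X belongs to the principal ideal of M(X) generated by a|_X. *)
Definition in_principal n (X : vec n -> Prop) (a h : vec n -> R) : Prop :=
  exists m : nat, ltn 0%nat m /\ forall y, X y -> h y <= mvmul m (a y).

(* Maximal ideals of M(X) are {h | h(y) = 0}, y in X; an intersection of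
   maximal ideals is {h | h(y) = 0 for all y in Y} for some Y vsubset of X.
   Strong semisimplicity: every principal ideal is such an intersection. *)
Definition strongly_semisimple n (X : vec n -> Prop) : Prop :=
  forall a, McNaughton a ->
    exists Y : vec n -> Prop, vsubset Y X /\
      forall h, McNaughton h -> (in_principal X a h <-> forall y, Y y -> h y = 0).

(* Notation: S = conv V is the simplex, F = conv_on A V its face, C = Cset x u lam
   the cone with vertices x, x + lam_0 u_0, ..., x + lam_0 u_0 + ... + lam_K u_K
   (k = K+1, indices from 0), and c_l = <v, u_l> for a displacement v.

   Since F and S meet X in the same set, f and g have the same zeros on X.  The
   substance is that f <= m g fails on X for every m:
   - C is not inside F but x is, so some vertex l0+1 of C lies outside F;
   - along the tangent, X contains points y = x + v with v eps-tangential: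
     c_0 >> c_1 >> ... >> c_K > 0 and each remainder v - p_(l+1)(v) is
     negligible against c_l;
   - the flag points x + p_m(v) lie in C; the one of order l0+1 puts positive
     weight on the vertex l0+1, hence lies outside F (faces are extreme), and
     the one of order k lies in S;
   - f and g are given by finitely many affine pieces; near the flag point of
     order m each piece is either of the size of the perturbation or at least
     ka c_(m-1) / 2, ka being the smallest nonzero coefficient of a piece
     along the flag.  By continuity this dichotomy persists along the segment
     to y, so f(y) >= ka c_l0 / 2 while g(y) <= B eps c_l0, which contradicts
     f(y) <= m g(y) for eps small.
   Strong semisimplicity then fails: the principal ideal of g would be cut out
   by zeros of g, all of which are zeros of f.

   The argument uses the affine independence of V but not the rationality of
   its vertices, and the finiteness of the list of pieces but not the
   integrality of their coefficients. *)

From HB Require Import structures.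
From mathcomp Require Import all_boot.
From Stdlib Require Import Reals Lra Psatz FunctionalExtensionality Classical ClassicalEpsilon.
Set Implicit Arguments.
Unset Strict Implicit.
Unset Printing Implicit Defensive.
Open Scope R_scope.

Lemma RplusA : associative Rplus. Proof. move=> a b c; lra. Qed.
HB.instance Definition _ := Monoid.isComLaw.Build R 0 Rplus RplusA Rplus_comm Rplus_0_l.

Lemma sumIE m (c : 'I_m -> R) : sumI c = \big[Rplus/0]_(i < m) c i.
Proof. by rewrite /sumI foldrE big_map big_enum. Qed.

Lemma sum_scal m r (F : 'I_m -> R) :
  \big[Rplus/0]_(i < m) (r * F i) = r * \big[Rplus/0]_(i < m) F i.
Proof.
apply: (big_ind2 (fun a b => a = r * b)); first by rewrite Rmult_0_r.
- by move=> ? ? ? ? -> ->; ring.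
- by [].
Qed.

Lemma sum_le m (F G : 'I_m -> R) : (forall i, F i <= G i) ->
  \big[Rplus/0]_(i < m) F i <= \big[Rplus/0]_(i < m) G i.
Proof.
move=> H; apply: (big_ind2 (fun a b => a <= b)); first lra.
- by move=> ? ? ? ? ? ?; lra.
- by move=> i _; apply: H.
Qed.

Lemma sum_abs m (F : 'I_m -> R) :
  Rabs (\big[Rplus/0]_(i < m) F i) <= \big[Rplus/0]_(i < m) Rabs (F i).
Proof.
apply: (big_ind2 (fun a b => Rabs a <= b)); first by rewrite Rabs_R0; lra.
- by move=> x1 x2 y1 y2 h1 h2; have := Rabs_triang x1 y1; lra.
- by move=> i _; lra.
Qed.

Lemma sum_ge0 m (F : 'I_m -> R) : (forall i, 0 <= F i) -> 0 <= \big[Rplus/0]_(i < m) F i.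
Proof.
move=> H; apply: (big_ind (fun a => 0 <= a)); first lra.
- by move=> ? ? ? ?; lra.
- by move=> i _; apply: H.
Qed.

Lemma sum_pick m (F : 'I_m -> R) j : \big[Rplus/0]_(i < m) F i =
  F j + \big[Rplus/0]_(i < m) (if i == j then 0 else F i).
Proof.
rewrite (bigD1 j) //=; congr Rplus.
rewrite [in RHS](bigD1 j) //= eqxx Rplus_0_l.
by apply: eq_bigr => i /negbTE ->.
Qed.

Lemma sum_const_le m (F : 'I_m -> R) b : (forall i, F i <= b) ->
  \big[Rplus/0]_(i < m) F i <= INR m * b.
Proof.
move=> H.
have -> : INR m * b = \big[Rplus/0]_(i < m) b.
  clear; elim: m => [|m IH]; first by rewrite big_ord0 /=; lra.
  by rewrite big_ord_recr -IH S_INR /=; lra.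
exact: sum_le.
Qed.

Lemma sum_nonneg_zero m (F : 'I_m -> R) j : (forall i, 0 <= F i) ->
  \big[Rplus/0]_(i < m) F i = 0 -> F j = 0.
Proof.
move=> h0; rewrite (sum_pick _ j).
have : 0 <= \big[Rplus/0]_(i < m) (if i == j then 0 else F i).
  by apply: sum_ge0 => i; case: ifP => _; [lra | apply: h0].
have := h0 j; lra.
Qed.

Lemma telescope (T : nat -> R) m :
  \big[Rplus/0]_(j < m) (T j - T j.+1) = T 0%nat - T m.
Proof.
elim: m => [|m IH]; first by rewrite big_ord0; ring.
by rewrite big_ord_recr /= IH; ring.
Qed.

Lemma telescope_from (T : nat -> R) a m : (a < m)%nat ->
  \big[Rplus/0]_(j < m) (if (a < j)%nat then T j - T j.+1 else 0) = T a.+1 - T m.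
Proof.
move=> h; rewrite -(subnKC h) addSn; elim: (m - a.+1)%nat => [|d IH].
  rewrite addn0 big1; first ring.
  by move=> j _; case: ifP => // /leq_trans /(_ (ltn_ord j)); rewrite ltnn.
rewrite addnS big_ord_recr /= IH (_ : (a < (a + d).+1)%nat = true); first ring.
by rewrite ltnS leq_addr.
Qed.

(** * Euclidean vector algebra on [vec n] *)

Lemma vec_ext n (a b : vec n) : (forall i, a i = b i) -> a = b.
Proof. exact: functional_extensionality. Qed.

Lemma dotE n (a b : vec n) : dot a b = \big[Rplus/0]_(i < n) (a i * b i).
Proof. by rewrite /dot sumIE. Qed.

Lemma lincombE n m (c : 'I_m -> R) (P : 'I_m -> vec n) t :
  lincomb c P t = \big[Rplus/0]_(j < m) (c j * P j t).
Proof. by rewrite /lincomb sumIE. Qed.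

Lemma dotC n (a b : vec n) : dot a b = dot b a.
Proof. by rewrite !dotE; apply: eq_bigr => i _; ring. Qed.

Lemma dot_add n (a b c : vec n) : dot (vadd a b) c = dot a c + dot b c.
Proof. by rewrite !dotE -big_split; apply: eq_bigr => i _ /=; rewrite /vadd; ring. Qed.

Lemma dot_scale n r (a c : vec n) : dot (vscale r a) c = r * dot a c.
Proof. by rewrite !dotE -sum_scal; apply: eq_bigr => i _; rewrite /vscale; ring. Qed.

Lemma dot_sub n (a b c : vec n) : dot (vsub a b) c = dot a c - dot b c.
Proof.
have -> : vsub a b = vadd a (vscale (-1) b).
  by apply: vec_ext => i; rewrite /vsub /vadd /vscale; ring.
by rewrite dot_add dot_scale; ring.
Qed.

Lemma dot_add_r n (a b c : vec n) : dot c (vadd a b) = dot c a + dot c b.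
Proof. by rewrite dotC dot_add (dotC a) (dotC b). Qed.

Lemma dot_sub_r n (a b c : vec n) : dot c (vsub a b) = dot c a - dot c b.
Proof. by rewrite dotC dot_sub (dotC a) (dotC b). Qed.

Lemma dot_scale_r n r (a c : vec n) : dot c (vscale r a) = r * dot c a.
Proof. by rewrite dotC dot_scale dotC. Qed.

Lemma dot_lincomb n m (c : 'I_m -> R) (P : 'I_m -> vec n) b :
  dot (lincomb c P) b = \big[Rplus/0]_(j < m) (c j * dot (P j) b).
Proof.
rewrite dotE; under eq_bigr => i _ do rewrite lincombE Rmult_comm -sum_scal.
rewrite exchange_big /=; apply: eq_bigr => j _.
by rewrite dotE -sum_scal; apply: eq_bigr => i _; ring.
Qed.

Lemma dot_lincomb_r n m (c : 'I_m -> R) (P : 'I_m -> vec n) b :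
  dot b (lincomb c P) = \big[Rplus/0]_(j < m) (c j * dot b (P j)).
Proof. by rewrite dotC dot_lincomb; apply: eq_bigr => j _; rewrite dotC. Qed.

Lemma lincomb_lincomb n m p (mu : 'I_m -> R) (be : 'I_m -> 'I_p -> R) (V : 'I_p -> vec n) :
  lincomb mu (fun j => lincomb (be j) V) =
  lincomb (fun t => \big[Rplus/0]_(j < m) (mu j * be j t)) V.
Proof.
apply: vec_ext => i; rewrite !lincombE.
under eq_bigr => j _ do rewrite lincombE -sum_scal.
rewrite exchange_big /=; apply: eq_bigr => t _.
by rewrite Rmult_comm -sum_scal; apply: eq_bigr => j _; ring.
Qed.

Lemma dot_ge0 n (a : vec n) : 0 <= dot a a.
Proof. by rewrite dotE; apply: sum_ge0 => i; nra. Qed.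

Lemma norm_ge0 n (a : vec n) : 0 <= norm a.
Proof. exact: sqrt_pos. Qed.

Lemma norm_sq n (a : vec n) : norm a * norm a = dot a a.
Proof. by rewrite /norm sqrt_sqrt //; apply: dot_ge0. Qed.

Lemma norm_le n (a : vec n) r : 0 <= r -> dot a a <= r * r -> norm a <= r.
Proof. by move=> r0 H; have := norm_ge0 a; have := norm_sq a; nra. Qed.

Lemma norm_scale n r (a : vec n) : norm (vscale r a) = Rabs r * norm a.
Proof.
rewrite /norm dot_scale dot_scale_r -Rmult_assoc sqrt_mult_alt; last nra.
by rewrite -/(Rsqr r) sqrt_Rsqr_abs.
Qed.

Lemma coord_le_norm n (a : vec n) i : Rabs (a i) <= norm a.
Proof.
have h0 := norm_ge0 a.
suff : a i * a i <= norm a * norm a by move=> h; apply: Rabs_le; split; nra.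
rewrite norm_sq dotE (sum_pick _ i).
suff : 0 <= \big[Rplus/0]_(j < n) (if j == i then 0 else a j * a j) by lra.
by apply: sum_ge0 => j; case: ifP => _; nra.
Qed.

Lemma dot0_vec n (a : vec n) : dot a a = 0 -> a = @vzero n.
Proof.
move=> h; apply: vec_ext => i; have := coord_le_norm a i.
rewrite /norm h sqrt_0 /vzero /Rabs; case: Rcase_abs; lra.
Qed.

Lemma dot_unit_le n (a w : vec n) : dot w w = 1 -> Rabs (dot a w) <= norm a.
Proof.
move=> hw; set t := dot a w.
have h := dot_ge0 (vsub a (vscale t w)).
rewrite dot_sub !dot_sub_r !dot_scale !dot_scale_r hw (dotC w a) -/t in h.
have h0 := norm_ge0 a; have h1 := norm_sq a.
by apply: Rabs_le; split; nra.
Qed.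

Lemma dot_bound n (b a : vec n) : Rabs (dot b a) <= sumI (fun i => Rabs (b i)) * norm a.
Proof.
rewrite dotE sumIE; apply: Rle_trans (sum_abs _) _.
rewrite Rmult_comm -sum_scal; apply: sum_le => i.
by rewrite Rabs_mult; have := coord_le_norm a i; have := Rabs_pos (b i); nra.
Qed.

Lemma unit_dot n k (u : 'I_k -> vec n) l : orthonormal u -> dot (u l) (u l) = 1.
Proof. by move=> hu; rewrite hu eqxx. Qed.

Lemma unit_norm n k (u : 'I_k -> vec n) l : orthonormal u -> norm (u l) = 1.
Proof. by move=> hu; rewrite /norm unit_dot // sqrt_1. Qed.

Lemma dot_lincomb_unit n k (u : 'I_k -> vec n) (c : 'I_k -> R) l :
  orthonormal u -> dot (lincomb c u) (u l) = c l.
Proof.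
move=> hu; rewrite dot_lincomb (sum_pick _ l) hu eqxx big1; first ring.
by move=> j _; case: ifP => // h; rewrite hu h; ring.
Qed.

Lemma dot_proj n k (u : 'I_k -> vec n) m y j : orthonormal u ->
  dot (proj u m y) (u j) = if ltn j m then dot y (u j) else 0.
Proof. by move=> hu; rewrite /proj dot_lincomb_unit. Qed.

Lemma proj_S n k (u : 'I_k -> vec n) (l : 'I_k) y :
  proj u l.+1 y = vadd (proj u l y) (vscale (dot y (u l)) (u l)).
Proof.
apply: vec_ext => i; rewrite /proj /vadd /vscale !lincombE.
rewrite (sum_pick _ l) [in RHS](sum_pick _ l) /ltn /= ltnn ltnSn.
rewrite Rmult_0_l Rplus_0_l Rplus_comm; congr Rplus.
apply: eq_bigr => j _; case: ifP => // /negbT hj.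
by rewrite ltnS leq_eqVlt (_ : (nat_of_ord j == l) = false) //; apply/negbTE.
Qed.

(** * Convex combinations and faces of a simplex *)

Lemma conv_coords n m d (A : 'I_d -> bool) (V : 'I_d -> vec n) (P : 'I_m -> vec n) :
  (forall j, conv_on A V (P j)) ->
  exists be : 'I_m -> 'I_d -> R, forall j,
    (forall t, 0 <= be j t) /\ (forall t, A t = false -> be j t = 0) /\
    sumI (be j) = 1 /\ P j = lincomb (be j) V.
Proof.
move=> hP; exists (fun j => proj1_sig (constructive_indefinite_description _ (hP j))).
by move=> j; case: (constructive_indefinite_description _ (hP j)).
Qed.

Lemma sumI_comb m p (mu : 'I_m -> R) (be : 'I_m -> 'I_p -> R) :
  sumI (fun t => \big[Rplus/0]_(j < m) (mu j * be j t)) =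
  \big[Rplus/0]_(j < m) (mu j * sumI (be j)).
Proof.
by rewrite sumIE exchange_big /=; apply: eq_bigr => j _; rewrite sumIE sum_scal.
Qed.

Lemma coords_comb m p (mu : 'I_m -> R) (be : 'I_m -> 'I_p -> R) :
  (forall j, 0 <= mu j) -> sumI mu = 1 ->
  (forall j t, 0 <= be j t) -> (forall j, sumI (be j) = 1) ->
  (forall t, 0 <= \big[Rplus/0]_(j < m) (mu j * be j t)) /\
  sumI (fun t => \big[Rplus/0]_(j < m) (mu j * be j t)) = 1.
Proof.
move=> hmu hs hbe hbs; split.
  by move=> t; apply: sum_ge0 => j; have := hmu j; have := hbe j t; nra.
by rewrite sumI_comb -hs sumIE; apply: eq_bigr => j _; rewrite hbs; ring.
Qed.

Lemma conv_comb n m d (A : 'I_d -> bool) (V : 'I_d -> vec n) (P : 'I_m -> vec n)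
    (mu : 'I_m -> R) :
  (forall j, 0 <= mu j) -> sumI mu = 1 -> (forall j, conv_on A V (P j)) ->
  conv_on A V (lincomb mu P).
Proof.
move=> hmu hs /conv_coords [be hbe].
have [hge hsum] := coords_comb hmu hs (fun j => (hbe j).1) (fun j => (hbe j).2.2.1).
exists (fun t => \big[Rplus/0]_(j < m) (mu j * be j t)); split; [by []|split; [|split]].
- by move=> t ht; apply: big1 => j _; rewrite ((hbe j).2.1 t ht); ring.
- by [].
- rewrite -lincomb_lincomb; congr lincomb; apply: functional_extensionality => j.
  exact: (hbe j).2.2.2.
Qed.

(* This
   is where the affine independence of the vertices is used. *)
Lemma face_extreme n m d (A : 'I_d -> bool) (V : 'I_d -> vec n) (P : 'I_m -> vec n)
    (mu : 'I_m -> R) j0 :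
  aff_indep V -> (forall j, 0 <= mu j) -> sumI mu = 1 -> (forall j, conv V (P j)) ->
  conv_on A V (lincomb mu P) -> 0 < mu j0 -> conv_on A V (P j0).
Proof.
move=> hV hmu hs /conv_coords [be hbe] [ga [_ [hgaA [hgas hgae]]]] hj0.
have [hge hsum] := coords_comb hmu hs (fun j => (hbe j).1) (fun j => (hbe j).2.2.1).
set ga' := fun t => \big[Rplus/0]_(j < m) (mu j * be j t).
have e1 : lincomb mu P = lincomb ga' V.
  rewrite /ga' -lincomb_lincomb; congr lincomb; apply: functional_extensionality => j.
  exact: (hbe j).2.2.2.
have same_coords : forall t, ga' t - ga t = 0.
  apply: hV.
    rewrite sumIE (eq_bigr (fun t => ga' t + (-1) * ga t)); last by move=> t _; ring.
    by rewrite big_split /= sum_scal -!sumIE hsum hgas; ring.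
  apply: vec_ext => i; rewrite /vzero lincombE.
  have := congr1 (fun z => z i) hgae; rewrite e1 !lincombE => h.
  rewrite (eq_bigr (fun t => ga' t * V t i + (-1) * (ga t * V t i))); last by move=> t _; ring.
  by rewrite big_split /= sum_scal h; ring.
exists (be j0); split; first exact: (hbe j0).1.
split; last exact: (hbe j0).2.2.
move=> t ht; have h0 : ga' t = 0 by have := same_coords t; rewrite (hgaA t ht); lra.
have : mu j0 * be j0 t = 0.
  apply: (@sum_nonneg_zero _ (fun j => mu j * be j t) j0) => // j.
  by have := hmu j; have := (hbe j).1 t; nra.
by case/Rmult_integral => //; lra.
Qed.

Lemma vertex_in_conv n m (P : 'I_m -> vec n) j : conv P (P j).
Proof.
exists (fun j' => if j' == j then 1 else 0); split; [|split; [by []|split]].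
- by move=> j'; case: ifP => _; lra.
- rewrite sumIE (sum_pick _ j) eqxx big1; first ring.
  by move=> i _; case: ifP => // h; rewrite h.
- apply: vec_ext => i; rewrite lincombE (sum_pick _ j) eqxx big1; first ring.
  by move=> i' _; case: ifP => // h; rewrite h; ring.
Qed.

(** * Points of the cone C = conv (Cpts x u lam) *)

(* The sequence 1, s_0, s_1, ...: vertex j of C gets weight s_(j-1) - s_j. *)
Definition shifted (s : nat -> R) (j : nat) : R := match j with O => 1 | S j' => s j' end.

Lemma cone_point n K (x : vec n) (u : 'I_K.+1 -> vec n) (lam : 'I_K.+1 -> R)
    (s : nat -> R) :
  (forall l, 0 <= s l) -> s 0%nat <= 1 -> (forall l, s l.+1 <= s l) -> s K.+1 = 0 ->
  let mu := fun j : 'I_K.+2 => shifted s j - shifted s j.+1 in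
  (forall j, 0 <= mu j) /\ sumI mu = 1 /\
  lincomb mu (Cpts x u lam) = vadd x (lincomb (fun l => s l * lam l) u).
Proof.
move=> h0 h1 hdec hK mu.
have hsum : \big[Rplus/0]_(j < K.+2) mu j = 1 by rewrite telescope /= hK; ring.
split; [|split; first by rewrite sumIE].
  by case=> [[|j] hj]; rewrite /mu /=; [lra | have := hdec j; lra].
apply: vec_ext => t; rewrite lincombE /vadd lincombE.
rewrite (eq_bigr (fun j => x t * mu j + \big[Rplus/0]_(l < K.+1)
                   ((if ltn l j then mu j else 0) * (lam l * u l t)))); last first.
  move=> j _; rewrite /Cpts /vadd lincombE Rmult_plus_distr_l -sum_scal Rmult_comm.
  by congr Rplus; apply: eq_bigr => l _; case: ifP => _; ring.
rewrite big_split /= exchange_big /= sum_scal hsum Rmult_1_r; congr Rplus.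
apply: eq_bigr => l _.
rewrite (eq_bigr (fun i : 'I_K.+2 => (lam l * u l t) *
          (if (l < i)%nat then shifted s i - shifted s i.+1 else 0))); last first.
  by move=> i _; rewrite /mu; case: ifP => _; ring.
by rewrite sum_scal telescope_from /= ?hK; [ring | rewrite ltnS ltnW].
Qed.

Lemma flag_point_in_cone n K (x : vec n) (u : 'I_K.+1 -> vec n) (lam c : 'I_K.+1 -> R)
    (mm : nat) :
  (forall l, 0 < lam l) -> (forall l, 0 < c l) -> (forall l, c l <= lam l) ->
  (forall p l : 'I_K.+1, nat_of_ord l = p.+1 -> c l / lam l <= c p / lam p) ->
  (0 < mm)%nat -> (mm <= K.+1)%nat ->
  exists mu : 'I_K.+2 -> R, (forall j, 0 <= mu j) /\ sumI mu = 1 /\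
    lincomb mu (Cpts x u lam) = vadd x (lincomb (fun l => if ltn l mm then c l else 0) u) /\
    (forall j : 'I_K.+2, nat_of_ord j = mm -> 0 < mu j).
Proof.
move=> hlam hc hcle hdec hmm0 hmmK.
have ratio_pos : forall l, 0 < c l / lam l by move=> l; apply: Rdiv_lt_0_compat.
pose s := fun j : nat => if (j < mm)%nat && (j < K.+1)%nat
                         then c (inord j) / lam (inord j) else 0.
have s0 : forall j, 0 <= s j.
  by move=> j; rewrite /s; case: ifP => _; [apply: Rlt_le | lra].
have s1 : s 0%nat <= 1.
  rewrite /s; case: ifP => _; last lra.
  have := hcle (inord 0); have := hlam (inord 0) => h1 h2.
  apply: (Rmult_le_reg_r (lam (inord 0))) => //.
  by rewrite /Rdiv Rmult_assoc Rinv_l; lra.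
have sdec : forall j, s j.+1 <= s j.
  move=> j; rewrite {1}/s; case: ifP => [/andP[hj1 hj2]|_]; last exact: s0.
  rewrite /s ifT; last by apply/andP; split; apply: ltnW.
  by apply: hdec; rewrite /= !inordK // ltnW.
have sK : s K.+1 = 0 by rewrite /s ltnn andbF.
have [hmu0 [hmus hmul]] := cone_point x u lam s0 s1 sdec sK.
exists (fun j : 'I_K.+2 => shifted s j - shifted s j.+1); do 2 split => //; split.
  rewrite hmul; congr vadd; congr lincomb; apply: functional_extensionality => l.
  rewrite /s /ltn /= ltn_ord andbT inord_val; case: ifP => _; last ring.
  by field; have := hlam l; lra.
move=> j ->; rewrite -(prednK hmm0) /= /s prednK // ltnn leqnn hmmK /=.
by rewrite Rminus_0_r; apply: ratio_pos.
Qed.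

(** * eps-tangential displacements along a k-tangent *)

Definition tangential n K (u : 'I_K -> vec n) (eps : R) (v : vec n) : Prop :=
  [/\ forall l, 0 < dot v (u l),
      forall l, dot v (u l) <= eps,
      forall p l : 'I_K, (p < l)%nat -> dot v (u l) <= eps * dot v (u p) &
      forall l : 'I_K, norm (vsub v (proj u l.+1 v)) <= eps * dot v (u l)].

Lemma near_direction n (w e : vec n) eps : dot e e = 1 -> 0 < norm w -> 0 < eps ->
  norm (vsub (normalize w) e) < Rmin (1/2) (eps * eps / 8) ->
  [/\ 0 < dot w e, dot w e <= norm w & norm (vsub w (vscale (dot w e) e)) <= eps * dot w e].
Proof.
move=> he hN heps hclose.
have eta1 := Rmin_l (1/2) (eps * eps / 8); have eta2 := Rmin_r (1/2) (eps * eps / 8).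
set N := norm w in hN *; set c := dot w e; set t := c / N.
have hNsq : N * N = dot w w := norm_sq w.
have ht : Rabs (t - 1) < Rmin (1/2) (eps * eps / 8).
  have := dot_unit_le (vsub (normalize w) e) he.
  rewrite dot_sub /normalize dot_scale he (_ : / norm w * dot w e = t).
    by move: hclose; rewrite /normalize; lra.
  by rewrite /t /c /N /Rdiv Rmult_comm.
have hc : c = t * N by rewrite /t; field; lra.
have hrem : dot (vsub w (vscale c e)) (vsub w (vscale c e)) = N * N - c * c.
  by rewrite dot_sub !dot_sub_r !dot_scale !dot_scale_r he (dotC e w) -/c -hNsq; ring.
have hrem0 := dot_ge0 (vsub w (vscale c e)); rewrite hrem hc in hrem0.
have [t_hi t_lo] := Rabs_def2 _ _ ht.
have t_sq : t * t <= 1 by apply: (Rmult_le_reg_l (N * N)); nra.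
have t_up : t <= 1 by nra.
have t_close : 1 - t * t <= eps * eps / 4.
  have : (1 - t) * (1 + t) <= (eps * eps / 8) * 2 by apply: Rmult_le_compat; lra.
  lra.
have hcpos : 0 < c by rewrite hc; apply: Rmult_lt_0_compat; lra.
split => //; first by rewrite hc; nra.
apply: norm_le; first nra.
rewrite hrem hc.
have : N * N * (1 - t * t) <= N * N * (eps * eps / 4) by apply: Rmult_le_compat_l; nra.
have : eps * eps * (N * N) * (1 / 4) <= eps * eps * (N * N) * (t * t).
  by apply: Rmult_le_compat_l; nra.
nra.
Qed.

Lemma eventually_all_ord k (P : 'I_k -> nat -> Prop) :
  (forall l, exists N, forall i, (N <= i)%nat -> P l i) ->
  exists N, forall i, (N <= i)%nat -> forall l, P l i.
Proof.
move=> H.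
suff [N HN] : exists N, forall i, (N <= i)%nat -> forall l, l \in enum 'I_k -> P l i.
  by exists N => i hi l; apply: HN => //; rewrite mem_enum.
elim: (enum 'I_k) => [|a s [N HN]]; first by exists 0%nat.
have [M HM] := H a.
exists (maxn N M) => i; rewrite geq_max => /andP[h1 h2] l.
by rewrite inE => /orP[/eqP->|hl]; [apply: HM | apply: HN].
Qed.

Lemma tangent_step n k (u : 'I_k -> vec n) (vs : nat -> vec n) (l : 'I_k) eps :
  orthonormal u -> (forall i, ~ in_span u (vs i)) ->
  vconv (fun i => normalize (vsub (vs i) (proj u l (vs i)))) (u l) -> 0 < eps ->
  exists N, forall i, (N <= i)%nat ->
    [/\ 0 < dot (vs i) (u l), dot (vs i) (u l) <= norm (vsub (vs i) (proj u l (vs i))) &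
        norm (vsub (vs i) (proj u l.+1 (vs i))) <= eps * dot (vs i) (u l)].
Proof.
move=> hu hspan hcv heps.
have heta : 0 < Rmin (1/2) (eps * eps / 8) by apply: Rmin_pos; nra.
have [N HN] := hcv _ heta; exists N => i /leP hi.
move: (HN i hi); rewrite /R_dist Rminus_0_r Rabs_pos_eq; last exact: norm_ge0.
move=> hclose.
set v := vs i; set w := vsub v (proj u l v).
have hwu : dot w (u l) = dot v (u l).
  by rewrite /w dot_sub dot_proj // /ltn /= ltnn Rminus_0_r.
have hw : 0 < norm w.
  have [hw0|] := Req_dec (dot w w) 0; last first.
    by move=> hne; apply: sqrt_lt_R0; have := dot_ge0 w; lra.
  exfalso; apply: (hspan i); exists (fun j : 'I_k => if ltn j l then dot v (u j) else 0).
  apply: vec_ext => t; have := congr1 (fun z => z t) (dot0_vec hw0).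
  by rewrite /w /vsub /vzero /proj /= -/v => h; lra.
have [hc hcN hrem] := near_direction (unit_dot l hu) hw heps hclose.
rewrite hwu in hc hcN hrem; split => //.
suff -> : vsub v (proj u l.+1 v) = vsub w (vscale (dot v (u l)) (u l)) by [].
by rewrite proj_S; apply: vec_ext => t; rewrite /w /vsub /vadd /vscale; ring.
Qed.

Lemma nonincreasing_upto (N : nat -> R) K : (forall j, (j < K)%nat -> N j.+1 <= N j) ->
  forall a b, (a <= b)%nat -> (b <= K)%nat -> N b <= N a.
Proof.
move=> H a b hab; rewrite -(subnKC hab); elim: (b - a)%nat => [|d IH] hK.
  by rewrite addn0; lra.
rewrite addnS in hK *; apply: Rle_trans (H _ hK) _; apply: IH; exact: ltnW.
Qed.

Lemma tangent_displacement n K (X : vec n -> Prop) (u : 'I_K.+1 -> vec n) x eps :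
  k_tangent X u x -> 0 < eps -> eps <= 1 ->
  exists y, X y /\ tangential u eps (vsub y x).
Proof.
move=> [hu [xs [hX [hconv [hspan hdir]]]]] heps heps1.
have [N1 HN1] := eventually_all_ord (fun l => tangent_step hu hspan (hdir l) heps).
have [N2 HN2] := hconv eps heps.
set i := maxn N1 N2; exists (xs i); split => //.
have := HN2 i (ssrnat.leP (leq_maxr N1 N2)).
rewrite /R_dist Rminus_0_r Rabs_pos_eq; last exact: norm_ge0.
move=> hv.
have {}HN1 := HN1 i (leq_maxl _ _).
set v := vsub (xs i) x in hv HN1 *.
have cpos l : 0 < dot v (u l) by case: (HN1 l).
have cleN l : dot v (u l) <= norm (vsub v (proj u l v)) by case: (HN1 l).
have Ntail (l : 'I_K.+1) : norm (vsub v (proj u l.+1 v)) <= eps * dot v (u l) by case: (HN1 l).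
have Nmono : forall a b, (a <= b)%nat -> (b <= K.+1)%nat ->
    norm (vsub v (proj u b v)) <= norm (vsub v (proj u a v)).
  apply: (@nonincreasing_upto (fun j => norm (vsub v (proj u j v)))) => j hj.
  have := Ntail (Ordinal hj); have := cleN (Ordinal hj); have := cpos (Ordinal hj).
  by rewrite /= => *; nra.
split => // [l | p l hpl].
  by have := dot_unit_le v (unit_dot l hu); have := Rle_abs (dot v (u l)); lra.
have := cleN l; have := Nmono p.+1 l hpl (ltnW (ltn_ord l)); have := Ntail p; lra.
Qed.

(** * A gap principle on segments *)

Definition cont01 (h : R -> R) : Prop := forall s, 0 <= s <= 1 -> forall e, 0 < e ->
  exists del, 0 < del /\
    forall s', 0 <= s' <= 1 -> Rabs (s' - s) < del -> Rabs (h s' - h s) < e.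

(* Retraction of R onto [0,1], used to extend functions continuously. *)
Definition clamp (s : R) : R := Rmax 0 (Rmin 1 s).

Lemma clamp_in s : 0 <= clamp s <= 1.
Proof. by rewrite /clamp /Rmax /Rmin; repeat destruct Rle_dec; lra. Qed.

Lemma clamp_lip s y : Rabs (clamp y - clamp s) <= Rabs (y - s).
Proof.
by rewrite /clamp /Rmax /Rmin; repeat destruct Rle_dec;
  rewrite /Rabs; repeat destruct Rcase_abs; lra.
Qed.

Lemma clamp_id s : 0 <= s <= 1 -> clamp s = s.
Proof. by move=> h; rewrite /clamp /Rmax /Rmin; repeat destruct Rle_dec; lra. Qed.

Lemma gap_down (h : R -> R) a b : a < b -> cont01 h ->
  (forall s, 0 <= s <= 1 -> h s <= a \/ b <= h s) -> h 0 <= a -> h 1 <= a.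
Proof.
move=> hab hc hd h0; have [//|h1] := Rle_lt_dec (h 1) a.
have h1b : b <= h 1 by case: (hd 1) => //; lra.
set H := fun s => h (clamp s) - (a + b) / 2.
have cont : continuity H.
  move=> s; rewrite /continuity_pt /continue_in /limit1_in /limit_in /= /R_dist => e he.
  have [del [hdel Hdel]] := hc (clamp s) (clamp_in s) e he.
  exists del; split => // y [_ hy].
  have := Hdel (clamp y) (clamp_in y) (Rle_lt_trans _ _ _ (clamp_lip s y) hy).
  by rewrite /H (_ : forall p q r, p - r - (q - r) = p - q) // => p q r; ring.
have H0 : H 0 < 0 by rewrite /H clamp_id; lra.
have H1 : 0 < H 1 by rewrite /H clamp_id; lra.
have [z [hz]] := IVT H 0 1 cont Rlt_0_1 H0 H1.
by rewrite /H clamp_id //; case: (hd z hz); lra.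
Qed.

Lemma gap_up (h : R -> R) a b : a < b -> cont01 h ->
  (forall s, 0 <= s <= 1 -> h s <= a \/ b <= h s) -> b <= h 0 -> b <= h 1.
Proof.
move=> hab hc hd h0.
suff : - h 1 <= - b by lra.
apply: (@gap_down (fun s => - h s) (- b) (- a)); [lra | | | lra].
- move=> s hs e he; have [del [hdel Hdel]] := hc s hs e he.
  exists del; split => // s' hs' hss.
  by rewrite (_ : - h s' - - h s = - (h s' - h s)) ?Rabs_Ropp; [apply: Hdel | ring].
- by move=> s hs; case: (hd s hs) => ?; [right | left]; lra.
Qed.

Lemma seg_cube n (P D : vec n) : inCube P -> inCube (vadd P D) ->
  forall s, 0 <= s <= 1 -> inCube (vadd P (vscale s D)).
Proof. by move=> h1 h2 s hs i; have := h1 i; have := h2 i; rewrite /vadd /vscale; nra. Qed.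

Lemma seg_cont n (f : vec n -> R) (P D : vec n) :
  (forall x, inCube x -> forall eps, 0 < eps -> exists delta, 0 < delta /\
     forall y, inCube y -> norm (vsub y x) < delta -> Rabs (f y - f x) < eps) ->
  (forall s, 0 <= s <= 1 -> inCube (vadd P (vscale s D))) ->
  cont01 (fun s => f (vadd P (vscale s D))).
Proof.
move=> hc hcube s hs e he.
have [del [hdel H]] := hc _ (hcube s hs) e he.
have hN := norm_ge0 D.
exists (del / (norm D + 1)); split; first by apply: Rdiv_lt_0_compat; lra.
move=> s' hs' hss; apply: H; first exact: hcube.
have -> : vsub (vadd P (vscale s' D)) (vadd P (vscale s D)) = vscale (s' - s) D.
  by apply: vec_ext => i; rewrite /vsub /vadd /vscale; ring.
rewrite norm_scale.
have h1 : Rabs (s' - s) * (norm D + 1) < del.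
  have := Rmult_lt_compat_r (norm D + 1) _ _ ltac:(lra) hss.
  by rewrite /Rdiv Rmult_assoc Rinv_l; lra.
by have := Rabs_pos (s' - s); nra.
Qed.

(** * Affine functions along a tangential displacement *)

Lemma ex_min_ord k (P : 'I_k -> Prop) : (exists l, P l) ->
  exists l, P l /\ forall l' : 'I_k, (l' < l)%nat -> ~ P l'.
Proof.
move=> [l0 hl0]; apply: NNPP => hno.
suff : forall N, forall l : 'I_k, (l < N)%nat -> ~ P l by move/(_ l0.+1 l0 (ltnSn _)).
elim=> [|N IH] l hl //.
move: hl; rewrite ltnS leq_eqVlt => /orP[/eqP e|hl]; last exact: IH.
by move=> hPl; apply: hno; exists l; split => // l' hl'; apply: IH; rewrite -e.
Qed.

Lemma Rabs_reverse3 r s q : Rabs r <= Rabs (r + s + q) + Rabs s + Rabs q.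
Proof.
have := Rabs_triang (r + s + q) (- s - q).
have := Rabs_triang (- s) (- q); rewrite /Rminus !Rabs_Ropp.
by rewrite (_ : r + s + q + (- s + - q) = r); [lra | ring].
Qed.

Lemma tail_mono K (c : 'I_K -> R) eps : (forall l, 0 < c l) -> eps <= 1 ->
  (forall p l : 'I_K, (p < l)%nat -> c l <= eps * c p) ->
  forall p l : 'I_K, (p <= l)%nat -> c l <= c p.
Proof.
move=> cpos he ctail p l; rewrite leq_eqVlt => /orP[/eqP e|hlt].
  by rewrite (_ : l = p); [lra | apply: ord_inj].
by have := ctail _ _ hlt; have := cpos p; nra.
Qed.

Section TruncatedSums.
(* c : coordinates of a tangential displacement; b : the coefficients
   <a, u_l> of a linear form a along the flag, bounded by A and, when
   nonzero, bounded below by ka. *)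
Variables (K : nat) (c b : 'I_K.+1 -> R) (eps A ka : R).
Hypotheses (c_pos : forall l, 0 < c l) (c_le : forall l, c l <= eps)
  (c_tail : forall p l : 'I_K.+1, (p < l)%nat -> c l <= eps * c p)
  (eps_pos : 0 < eps) (eps_le1 : eps <= 1) (A_ge0 : 0 <= A)
  (b_le : forall l, Rabs (b l) <= A) (b_ge : forall l, b l <> 0 -> ka <= Rabs (b l)).

(* The value of the linear form at the first m coordinates of the
   displacement. *)
Definition trunc_sum (m : nat) : R :=
  \big[Rplus/0]_(l < K.+1) ((if ltn l m then c l else 0) * b l).

Lemma trunc_sum_small m : Rabs (trunc_sum m) <= INR K.+1 * A * eps.
Proof.
rewrite Rmult_assoc; apply: Rle_trans (sum_abs _) _; apply: sum_const_le => l.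
case: ifP => _; last by rewrite Rmult_0_l Rabs_R0; nra.
rewrite Rabs_mult Rabs_pos_eq; last by have := c_pos l; lra.
by have := c_le l; have := b_le l; have := c_pos l; have := Rabs_pos (b l); nra.
Qed.

Lemma trunc_sum_leading m (p0 : 'I_K.+1) : (p0 < m)%nat ->
  (forall l : 'I_K.+1, (l < p0)%nat -> b l = 0) ->
  Rabs (trunc_sum m - c p0 * b p0) <= INR K.+1 * (eps * c p0 * A).
Proof.
move=> hp0m hbefore; rewrite /trunc_sum (sum_pick _ p0) (_ : ltn p0 m = true) //.
rewrite Rplus_minus_l.
apply: Rle_trans (sum_abs _) _; apply: sum_const_le => l.
have hpos : 0 <= eps * c p0 * A.
  by have := c_pos p0; move=> ?; apply: Rmult_le_pos; [apply: Rmult_le_pos|]; lra.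
case: ifP => hl; first by rewrite Rabs_R0.
case: ifP => _; last by rewrite Rmult_0_l Rabs_R0.
case: (ltngtP l p0) => hlp.
- by rewrite hbefore // Rmult_0_r Rabs_R0.
- rewrite Rabs_mult Rabs_pos_eq; last by have := c_pos l; lra.
  have := c_tail hlp; have := b_le l; have := c_pos l; have := Rabs_pos (b l); nra.
- by move: hl; rewrite (_ : l = p0) ?eqxx //; apply: val_inj.
Qed.

Section Estimates.
Variables (de t : R) (m : nat) (mo : 'I_K.+1).
Hypotheses (ka_pos : 0 < ka)
  (small1 : INR K.+1 * A * eps + A * eps <= ka / 2)
  (small2 : INR K.+1 * A * eps + A * eps + ka * eps <= de)
  (hm : mo.+1 = m) (ht : Rabs t <= A * eps * c mo).

Lemma far_from_zero_set P0 : de <= Rabs P0 ->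
  ka * c mo / 2 <= Rabs (P0 + trunc_sum m + t).
Proof.
move=> hP0; have := trunc_sum_small m; have := Rabs_reverse3 P0 (trunc_sum m) t.
have := c_pos mo; have := c_le mo => ? ?.
have : Rabs t <= A * eps.
  apply: Rle_trans ht _; rewrite -[X in _ <= X]Rmult_1_r.
  by apply: Rmult_le_compat_l; [apply: Rmult_le_pos | ]; lra.
have : ka * c mo <= ka * eps by apply: Rmult_le_compat_l; lra.
have : 0 < ka * c mo by apply: Rmult_lt_0_compat.
lra.
Qed.

Lemma leading_coefficient (p0 : 'I_K.+1) : (p0 < m)%nat -> b p0 <> 0 ->
  (forall l : 'I_K.+1, (l < p0)%nat -> b l = 0) ->
  ka * c mo / 2 <= Rabs (trunc_sum m + t).
Proof.
move=> hp0m hb0 hbefore; set C := c p0.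
have lead := trunc_sum_leading hp0m hbefore; rewrite -/C in lead.
have hCpos : 0 < C := c_pos p0.
have hmoC : c mo <= C.
  by apply: (tail_mono c_pos eps_le1 c_tail); rewrite -ltnS hm.
have f1 : C * ka <= Rabs (C * b p0).
  by rewrite Rabs_mult Rabs_pos_eq; [apply: Rmult_le_compat_l; [lra | apply: b_ge] | lra].
have f2 : INR K.+1 * (eps * C * A) + A * eps * C <= ka / 2 * C.
  by have := Rmult_le_compat_r C _ _ (Rlt_le _ _ hCpos) small1; lra.
have f3 : Rabs t <= A * eps * C.
  by apply: Rle_trans ht _; apply: Rmult_le_compat_l => //; nra.
have f4 : ka * c mo <= ka * C by apply: Rmult_le_compat_l; lra.
have := Rabs_reverse3 (C * b p0) (trunc_sum m - C * b p0) t.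
by rewrite (_ : C * b p0 + (trunc_sum m - C * b p0) + t = trunc_sum m + t); [lra | ring].
Qed.

(* An affine function at the flag point x + p_m(v), perturbed by t of order
   c_(m-1), is either just the perturbation or of size at least
   ka c_(m-1) / 2.  The constant term P0 is the value at x. *)
Lemma affine_dichotomy P0 : (P0 <> 0 -> de <= Rabs P0) ->
  Rabs (P0 + trunc_sum m + t) <= Rabs t \/ ka * c mo / 2 <= Rabs (P0 + trunc_sum m + t).
Proof.
move=> hde; have [hP0|/hde hP0] := Req_dec P0 0; last by right; apply: far_from_zero_set.
rewrite hP0 Rplus_0_l.
have [hex|hnone] := classic (exists l : 'I_K.+1, (l < m)%nat /\ b l <> 0).
  have [p0 [[hp0m hb0] hmin]] := ex_min_ord hex.
  right; apply: (leading_coefficient hp0m hb0) => l hl.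
  by apply: NNPP => hbl; apply: (hmin l hl); split => //; apply: ltn_trans hl hp0m.
left; suff -> : trunc_sum m = 0 by rewrite Rplus_0_l; lra.
apply: big1 => l _; case: ifP => hl; last ring.
have [->|hbl] := Req_dec (b l) 0; first ring.
by exfalso; apply: hnone; exists l.
Qed.

End Estimates.
End TruncatedSums.

(** * McNaughton functions near the flag points x + p_m(v) *)

Definition coef n (p : ('I_n -> Z) * Z) : vec n := fun i => IZR (p.1 i).

Definition flag_point n k (x : vec n) (u : 'I_k -> vec n) (m : nat) (v : vec n) : vec n :=
  vadd x (proj u m v).

Definition pieces_in n (PS : list (('I_n -> Z) * Z)) (h : vec n -> R) : Prop :=
  forall y, inCube y -> exists p, List.In p PS /\ h y = aff_eval p y.

Lemma aff_add n p (y w : vec n) : aff_eval p (vadd y w) = aff_eval p y + dot (coef p) w.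
Proof. by rewrite /aff_eval -/(dot (coef p) y) -/(dot (coef p) (vadd y w)) dot_add_r; ring. Qed.

Lemma aff_flag n K (u : 'I_K.+1 -> vec n) (x v dd : vec n) p m s :
  aff_eval p (vadd (flag_point x u m v) (vscale s dd)) =
  aff_eval p x + trunc_sum (fun l => dot v (u l)) (fun l => dot (coef p) (u l)) m
  + s * dot (coef p) dd.
Proof. by rewrite !aff_add dot_scale_r /proj dot_lincomb_r. Qed.

Lemma norm_zero n : norm (@vzero n) = 0.
Proof. by rewrite /norm dotE big1 ?sqrt_0 // => i _; rewrite /vzero; ring. Qed.

Lemma seg_at0 n (P D : vec n) : vadd P (vscale 0 D) = P.
Proof. by apply: vec_ext => i; rewrite /vadd /vscale; ring. Qed.

Lemma seg_at1 n (P D : vec n) : vadd P (vscale 1 D) = vadd P D.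
Proof. by apply: vec_ext => i; rewrite /vadd /vscale; ring. Qed.

Section FlagEstimates.
(* The constants B (size of the linear parts), ka (smallest nonzero
   coefficient of a linear part along the flag) and de (smallest nonzero
   value of a piece at x) are attached to the finite list of pieces PS; eps is
   small with respect to all of them. *)
Variables (n K : nat) (u : 'I_K.+1 -> vec n) (x v : vec n) (eps B ka de : R)
  (PS : list (('I_n -> Z) * Z)).
Hypotheses (hu : orthonormal u) (hv : tangential u eps v)
  (eps_pos : 0 < eps) (eps_le1 : eps <= 1) (B_ge0 : 0 <= B) (ka_pos : 0 < ka)
  (B_bound : forall p, List.In p PS -> forall w, Rabs (dot (coef p) w) <= B * norm w)
  (ka_bound : forall p, List.In p PS -> forall l,
     dot (coef p) (u l) <> 0 -> ka <= Rabs (dot (coef p) (u l)))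
  (de_bound : forall p, List.In p PS -> aff_eval p x <> 0 -> de <= Rabs (aff_eval p x))
  (small1 : INR K.+1 * B * eps + B * eps <= ka / 2)
  (small2 : INR K.+1 * B * eps + B * eps + ka * eps <= de).

Lemma piece_dichotomy p (mo : 'I_K.+1) s dd : List.In p PS -> 0 <= s <= 1 ->
  norm dd <= eps * dot v (u mo) ->
  let y := vadd (flag_point x u mo.+1 v) (vscale s dd) in
  Rabs (aff_eval p y) <= B * norm dd \/ ka * dot v (u mo) / 2 <= Rabs (aff_eval p y).
Proof.
move=> hp hs hdd y; have [cpos cle ctail _] := hv.
have hbl : forall l, Rabs (dot (coef p) (u l)) <= B.
  by move=> l; have := B_bound hp (u l); rewrite unit_norm // Rmult_1_r.
have ht : Rabs (s * dot (coef p) dd) <= B * norm dd.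
  rewrite Rabs_mult Rabs_pos_eq; last lra.
  by have := B_bound hp dd; have := Rabs_pos (dot (coef p) dd); nra.
have ht' : Rabs (s * dot (coef p) dd) <= B * eps * dot v (u mo).
  by apply: Rle_trans ht _; rewrite Rmult_assoc; apply: Rmult_le_compat_l.
rewrite /y aff_flag.
case: (affine_dichotomy cpos cle ctail eps_pos eps_le1 B_ge0 hbl (ka_bound hp) ka_pos
        small1 small2 erefl ht' (de_bound hp)) => h; [left; lra | by right].
Qed.

Section AlongSegment.
Variables (h : vec n -> R) (mo : 'I_K.+1) (dd : vec n).
Hypotheses (hM : McNaughton h) (hP : pieces_in PS h)
  (z_cube : inCube (flag_point x u mo.+1 v))
  (end_cube : inCube (vadd (flag_point x u mo.+1 v) dd))
  (dd_small : norm dd <= eps * dot v (u mo)).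

Let z := flag_point x u mo.+1 v.
Let seg := fun s => h (vadd z (vscale s dd)).

Lemma seg_in_cube s : 0 <= s <= 1 -> inCube (vadd z (vscale s dd)).
Proof. exact: seg_cube. Qed.

Lemma seg_dichotomy s : 0 <= s <= 1 ->
  seg s <= B * norm dd \/ ka * dot v (u mo) / 2 <= seg s.
Proof.
move=> hs; rewrite /seg; have [p [hp hval]] := hP (seg_in_cube hs).
have h0 := proj1 (proj1 hM _ (seg_in_cube hs)).
rewrite hval in h0 *; rewrite -(Rabs_pos_eq _ h0).
exact: piece_dichotomy.
Qed.

Lemma seg_gap : B * norm dd < ka * dot v (u mo) / 2.
Proof.
have [cpos _ _ _] := hv; have := cpos mo; have := norm_ge0 dd => h1 h2.
have hBe : B * eps <= ka / 4.
  have hK1 : 1 <= INR K.+1 by rewrite S_INR; have := pos_INR K; lra.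
  have : 1 * (B * eps) <= INR K.+1 * (B * eps).
    by apply: Rmult_le_compat_r; [apply: Rmult_le_pos | ]; lra.
  lra.
have : B * norm dd <= B * (eps * dot v (u mo)) by apply: Rmult_le_compat_l.
nra.
Qed.

Lemma seg_continuous : cont01 seg.
Proof. exact: seg_cont (proj1 (proj2 hM)) seg_in_cube. Qed.

Lemma stays_large : 0 < h z -> ka * dot v (u mo) / 2 <= h (vadd z dd).
Proof.
move=> hz; rewrite -seg_at1; apply: (gap_up seg_gap seg_continuous seg_dichotomy).
have [p [hp hval]] := hP z_cube.
have [cpos _ _ _] := hv.
have hz0 : norm (@vzero n) <= eps * dot v (u mo).
  by rewrite norm_zero; apply: Rmult_le_pos; [lra | apply: Rlt_le].
have /= := piece_dichotomy hp (conj (Rle_refl 0) Rle_0_1) hz0.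
rewrite /seg !seg_at0 /z -hval norm_zero Rabs_pos_eq -/z; [by case=> ?; lra | lra].
Qed.

Lemma stays_small : h z = 0 -> h (vadd z dd) <= B * norm dd.
Proof.
move=> hz; rewrite -seg_at1; apply: (gap_down seg_gap seg_continuous seg_dichotomy).
by rewrite /seg seg_at0 hz; apply: Rmult_le_pos => //; apply: norm_ge0.
Qed.

End AlongSegment.
End FlagEstimates.

(** * Choice of the constants *)

Lemma fin_lb (T : Type) (L : list T) (h : T -> R) (P : T -> Prop) :
  (forall t, List.In t L -> P t -> 0 < h t) ->
  exists ka, 0 < ka /\ forall t, List.In t L -> P t -> ka <= h t.
Proof.
elim: L => [|a L IH] H; first by exists 1; split => //; lra.
have [ka [hka Hk]] := IH (fun t ht => H t (or_intror ht)).
have [hPa|hPa] := classic (P a); last first.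
  by exists ka; split => // t [<-|ht] hPt; [ | apply: Hk].
have ha := H a (or_introl erefl) hPa.
exists (Rmin ka (h a)); split; first exact: Rmin_pos.
move=> t [<-|ht] hPt; first exact: Rmin_r.
by apply: Rle_trans (Rmin_l _ _) _; apply: Hk.
Qed.

Lemma fin_ub (T : Type) (L : list T) (h : T -> R) :
  exists B, 0 <= B /\ forall t, List.In t L -> h t <= B.
Proof.
elim: L => [|a L [B [hB HB]]]; first by exists 0; split => //; lra.
exists (Rmax B (h a)); split; first exact: Rle_trans hB (Rmax_l _ _).
move=> t [<-|ht]; first exact: Rmax_r.
by apply: Rle_trans (Rmax_l _ _); apply: HB.
Qed.

Lemma In_enum k (l : 'I_k) : List.In l (enum 'I_k).
Proof.
have : l \in enum 'I_k by rewrite mem_enum.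
by elim: (enum 'I_k) => //= a s IH; rewrite inE => /orP[/eqP->|/IH]; auto.
Qed.

Lemma piece_constants n k (PS : list (('I_n -> Z) * Z)) (u : 'I_k -> vec n) (x : vec n) :
  exists B ka de, [/\ 0 <= B, 0 < ka & 0 < de] /\ [/\
    forall p, List.In p PS -> forall w, Rabs (dot (coef p) w) <= B * norm w,
    forall p, List.In p PS -> forall l,
      dot (coef p) (u l) <> 0 -> ka <= Rabs (dot (coef p) (u l)) &
    forall p, List.In p PS -> aff_eval p x <> 0 -> de <= Rabs (aff_eval p x)].
Proof.
have [B [hB HB]] := fin_ub PS (fun p => sumI (fun i => Rabs (coef p i))).
have [ka [hka Hka]] := @fin_lb _ (List.list_prod PS (enum 'I_k))
   (fun pl => Rabs (dot (coef pl.1) (u pl.2))) (fun pl => dot (coef pl.1) (u pl.2) <> 0)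
   (fun pl _ h => Rabs_pos_lt _ h).
have [de [hde Hde]] := @fin_lb _ PS (fun p => Rabs (aff_eval p x))
   (fun p => aff_eval p x <> 0) (fun p _ h => Rabs_pos_lt _ h).
exists B, ka, de; split; split => //.
- move=> p hp w; apply: Rle_trans (dot_bound _ _) _.
  by apply: Rmult_le_compat_r; [apply: norm_ge0 | apply: HB].
- by move=> p hp l h; apply: (Hka (p, l) (List.in_prod _ _ _ _ hp (In_enum l)) h).
Qed.

Lemma lam_bounds K (lam : 'I_K.+1 -> R) : (forall l, 0 < lam l) ->
  exists lmin lmax, [/\ 0 < lmin, 0 < lmax, forall l, lmin <= lam l & forall l, lam l <= lmax].
Proof.
move=> hlam.
have [lmin [hlmin Hlmin]] := @fin_lb _ (enum 'I_K.+1) lam (fun _ => True) (fun l _ _ => hlam l).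
have [lmax [_ Hlmax]] := fin_ub (enum 'I_K.+1) lam.
exists lmin, lmax; split => // [|l|l]; last exact: Hlmax l (In_enum l).
  by have := Hlmax ord0 (In_enum _); have := hlam ord0; lra.
exact: Hlmin l (In_enum l) I.
Qed.

Lemma choose_eps (K m : nat) (B ka de lmin lmax : R) :
  0 <= B -> 0 < ka -> 0 < de -> 0 < lmin -> 0 < lmax ->
  exists eps, [/\ 0 < eps, eps <= 1, eps <= lmin & eps * lmax <= lmin] /\
    [/\ INR K.+1 * B * eps + B * eps <= ka / 2,
         INR K.+1 * B * eps + B * eps + ka * eps <= de & INR m * B * eps <= ka / 4].
Proof.
move=> hB hka hde hl hL.
have hK := pos_INR K.+1; have hm := pos_INR m.
set E := (INR K.+1 + INR m + 1) * (B + 1).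
have hE : 1 <= E by rewrite /E; nra.
set eps := Rmin (Rmin 1 (ka / (4 * E))) (Rmin (de / (E + ka)) (Rmin lmin (lmin / lmax))).
have e1 : eps <= 1 by apply: Rle_trans (Rmin_l _ _) (Rmin_l _ _).
have e2 : eps <= ka / (4 * E) by apply: Rle_trans (Rmin_l _ _) (Rmin_r _ _).
have e3 : eps <= de / (E + ka) by apply: Rle_trans (Rmin_r _ _) (Rmin_l _ _).
have e4 : eps <= lmin by do 2 apply: Rle_trans (Rmin_r _ _) _; apply: Rmin_l.
have e5 : eps <= lmin / lmax by do 2 apply: Rle_trans (Rmin_r _ _) _; apply: Rmin_r.
have epos : 0 < eps by repeat apply: Rmin_pos; try lra; apply: Rdiv_lt_0_compat; lra.
have hEe : E * eps <= ka / 4.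
  have := Rmult_le_compat_l E _ _ ltac:(lra) e2.
  by rewrite (_ : E * (ka / (4 * E)) = ka / 4) //; field; lra.
have hEe2 : (E + ka) * eps <= de.
  have := Rmult_le_compat_l (E + ka) _ _ ltac:(lra) e3.
  by rewrite (_ : (E + ka) * (de / (E + ka)) = de) //; field; lra.
have hEe3 : eps * lmax <= lmin.
  have := Rmult_le_compat_r lmax _ _ ltac:(lra) e5.
  by rewrite (_ : lmin / lmax * lmax = lmin) //; field; lra.
have hb1 : (INR K.+1 + 1) * B * eps <= E * eps.
  by apply: Rmult_le_compat_r; rewrite /E; nra.
have hb2 : INR m * B * eps <= E * eps by apply: Rmult_le_compat_r; rewrite /E; nra.
exists eps; do 2 split => //; lra.
Qed.

Lemma Cpts_first n k (x : vec n) (u : 'I_k -> vec n) (lam : 'I_k -> R) :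
  Cpts x u lam ord0 = x.
Proof.
apply: vec_ext => t; rewrite /Cpts /vadd lincombE big1; first ring.
by move=> l _; rewrite /ltn /=; ring.
Qed.

Lemma outgoing_vertex n K (x : vec n) (u : 'I_K.+1 -> vec n) (lam : 'I_K.+1 -> R)
    d (V : 'I_d -> vec n) (A : 'I_d -> bool) :
  conv_on A V x -> ~ vsubset (Cset x u lam) (conv_on A V) ->
  exists l0 : 'I_K.+1, forall j0 : 'I_K.+2,
    nat_of_ord j0 = l0.+1 -> ~ conv_on A V (Cpts x u lam j0).
Proof.
move=> xF hCF.
have [j0 hj0] : exists j0, ~ conv_on A V (Cpts x u lam j0).
  apply: NNPP => hno; apply: hCF => y [c [hc0 [_ [hcs ->]]]].
  by apply: conv_comb => // j; apply: NNPP => hj; apply: hno; exists j.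
have hj0pos : (0 < j0)%nat.
  rewrite lt0n; apply/negP => /eqP e; apply: hj0.
  by rewrite (_ : j0 = ord0) ?Cpts_first //; apply: val_inj.
have hl : (j0.-1 < K.+1)%nat by rewrite -ltnS prednK.
exists (Ordinal hl) => j e; rewrite (_ : j = j0) //; apply: ord_inj.
by rewrite e /= prednK.
Qed.

Lemma tangential_ratios n K (u : 'I_K.+1 -> vec n) (lam : 'I_K.+1 -> R) (v : vec n)
    eps lmin lmax :
  tangential u eps v -> (forall l, 0 < lam l) ->
  (forall l, lmin <= lam l) -> (forall l, lam l <= lmax) ->
  0 < eps -> eps <= lmin -> eps * lmax <= lmin ->
  (forall l, dot v (u l) <= lam l) /\
  (forall p l : 'I_K.+1, nat_of_ord l = p.+1 ->
     dot v (u l) / lam l <= dot v (u p) / lam p).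
Proof.
move=> [cpos cle ctail _] hlam hlmin hlmax heps hel hell; split.
  by move=> l; have := cle l; have := hlmin l; lra.
move=> p l e; have hpl : (p < l)%nat by rewrite e.
have := ctail p l hpl; have := hlam p; have := hlam l; have := hlmax p; have := hlmin l.
have := cpos p; have := cpos l => cl cp m1 m2 l1 l2 ht.
have key : dot v (u l) * lam p <= dot v (u p) * lam l.
  have : eps * lam p <= lam l by nra.
  by move=> h; have : dot v (u l) * lam p <= eps * dot v (u p) * lam p; nra.
apply: (Rmult_le_reg_r (lam l * lam p)); first nra.
rewrite (_ : dot v (u l) / lam l * (lam l * lam p) = dot v (u l) * lam p); last by field; lra.
by rewrite (_ : dot v (u p) / lam p * (lam l * lam p) = dot v (u p) * lam l); last by field; lra.
Qed.

Lemma flag_point_in_C n K (x : vec n) (u : 'I_K.+1 -> vec n) (lam : 'I_K.+1 -> R)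
    (v : vec n) eps lmin lmax d (V : 'I_d -> vec n) (A : 'I_d -> bool) (mm : nat) :
  tangential u eps v -> (forall l, 0 < lam l) ->
  (forall l, lmin <= lam l) -> (forall l, lam l <= lmax) ->
  0 < eps -> eps <= lmin -> eps * lmax <= lmin -> (0 < mm)%nat -> (mm <= K.+1)%nat ->
  Cset x u lam (flag_point x u mm v) /\
  (aff_indep V -> vsubset (Cset x u lam) (conv V) ->
   (forall j0 : 'I_K.+2, nat_of_ord j0 = mm -> ~ conv_on A V (Cpts x u lam j0)) ->
   ~ conv_on A V (flag_point x u mm v)).
Proof.
move=> hv hlam hlmin hlmax heps hel hell hmm0 hmmK.
have [cle cratio] := tangential_ratios hv hlam hlmin hlmax heps hel hell.
have [cpos _ _ _] := hv.
have [mu [hmu0 [hmus [hmul hmupos]]]] := flag_point_in_cone x u hlam cpos cle cratio hmm0 hmmK.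
have hC : Cset x u lam (flag_point x u mm v) by exists mu.
split => // hV hCS hout hF.
have hmm : (mm < K.+2)%nat by [].
have vertex_in_S : forall j, conv V (Cpts x u lam j) by move=> j; apply/hCS/vertex_in_conv.
apply: (hout (Ordinal hmm) erefl).
apply: (face_extreme hV hmu0 hmus vertex_in_S _ (hmupos (Ordinal hmm) erefl)).
by rewrite hmul.
Qed.

Lemma mvmul_le m a : 0 <= a -> mvmul m a <= INR m * a.
Proof.
move=> ha; elim: m => [|m IH]; first by rewrite /=; lra.
change (oplus (mvmul m a) a <= INR m.+1 * a); rewrite /oplus.
apply: Rle_trans (Rmin_r _ _) _.
by rewrite S_INR; lra.
Qed.

Section TangentPoint.
(* The data of Theorem 6 with k = K+1; h stands for f or g, PS is a list of
   affine pieces describing both, and y = x + v with v eps-tangential. *)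
Variables (n K : nat) (x y : vec n) (u : 'I_K.+1 -> vec n) (d : nat)
  (V : 'I_d -> vec n) (A : 'I_d -> bool) (lam : 'I_K.+1 -> R) (h : vec n -> R)
  (PS : list (('I_n -> Z) * Z)) (eps B ka de lmin lmax : R).
Hypotheses (hu : orthonormal u) (hV : aff_indep V) (hScube : vsubset (conv V) (@inCube n))
  (hlam : forall l, 0 < lam l) (hCS : vsubset (Cset x u lam) (conv V))
  (hM : McNaughton h) (hP : pieces_in PS h) (y_cube : inCube y)
  (hv : tangential u eps (vsub y x))
  (eps_pos : 0 < eps) (eps_le1 : eps <= 1) (B_ge0 : 0 <= B) (ka_pos : 0 < ka)
  (B_bound : forall p, List.In p PS -> forall w, Rabs (dot (coef p) w) <= B * norm w)
  (ka_bound : forall p, List.In p PS -> forall l,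
     dot (coef p) (u l) <> 0 -> ka <= Rabs (dot (coef p) (u l)))
  (de_bound : forall p, List.In p PS -> aff_eval p x <> 0 -> de <= Rabs (aff_eval p x))
  (small1 : INR K.+1 * B * eps + B * eps <= ka / 2)
  (small2 : INR K.+1 * B * eps + B * eps + ka * eps <= de)
  (lmin_le : forall l, lmin <= lam l) (le_lmax : forall l, lam l <= lmax)
  (eps_lmin : eps <= lmin) (eps_lmax : eps * lmax <= lmin).

Let v := vsub y x.

Lemma flag_to_y mm : vadd (flag_point x u mm v) (vsub v (proj u mm v)) = y.
Proof. by apply: vec_ext => t; rewrite /flag_point /v /vadd /vsub; ring. Qed.

Lemma large_at_tangent_point (l0 : 'I_K.+1) :
  (forall y, inCube y -> (h y = 0 <-> conv_on A V y)) ->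
  (forall j0 : 'I_K.+2, nat_of_ord j0 = l0.+1 -> ~ conv_on A V (Cpts x u lam j0)) ->
  ka * dot v (u l0) / 2 <= h y.
Proof.
move=> hzero hout; have [_ _ _ Ntail] := hv.
have [z1C z1F] := @flag_point_in_C _ _ x u lam v eps lmin lmax _ V A l0.+1
  hv hlam lmin_le le_lmax eps_pos eps_lmin eps_lmax (ltn0Sn _) (ltn_ord l0).
have z1cube := hScube (hCS z1C).
have hz1 : 0 < h (flag_point x u l0.+1 v).
  have [[] // /esym hz _] := proj1 hM _ z1cube.
  by case: (z1F hV hCS hout); apply/(hzero _ z1cube).
rewrite -(flag_to_y l0.+1).
apply: (stays_large hu hv eps_pos eps_le1 B_ge0 ka_pos B_bound ka_bound de_bound
          small1 small2 hM hP z1cube _ (Ntail l0) hz1).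
by rewrite flag_to_y.
Qed.

Lemma small_at_tangent_point :
  (forall y, inCube y -> (h y = 0 <-> conv V y)) ->
  h y <= B * (eps * dot v (u ord_max)).
Proof.
move=> hzero; have [_ _ _ Ntail] := hv.
have [z2C _] := @flag_point_in_C _ _ x u lam v eps lmin lmax _ V (fun _ => true) K.+1
  hv hlam lmin_le le_lmax eps_pos eps_lmin eps_lmax (ltn0Sn _) (leqnn _).
have z2cube := hScube (hCS z2C).
have hz2 : h (flag_point x u (@ord_max K).+1 v) = 0 by apply/(hzero _ z2cube)/hCS.
apply: Rle_trans (Rmult_le_compat_l _ _ _ B_ge0 (Ntail ord_max)).
rewrite -{1}(flag_to_y (@ord_max K).+1).
apply: (stays_small hu hv eps_pos eps_le1 B_ge0 ka_pos B_bound ka_bound de_bound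
          small1 small2 (mo := ord_max) hM hP z2cube _ (Ntail ord_max) hz2).
by rewrite flag_to_y.
Qed.

End TangentPoint.

Lemma not_in_principal n K (X : vec n -> Prop) (x : vec n) (u : 'I_K.+1 -> vec n)
    d (V : 'I_d -> vec n) (A : 'I_d -> bool) (lam : 'I_K.+1 -> R) (f g : vec n -> R) :
  vsubset X (@inCube n) -> vclosed X -> k_tangent X u x -> aff_indep V ->
  vsubset (conv V) (@inCube n) -> (forall l, 0 < lam l) ->
  vsubset (Cset x u lam) (conv V) -> ~ vsubset (Cset x u lam) (conv_on A V) ->
  (forall y, (conv_on A V y /\ X y) <-> (conv V y /\ X y)) ->
  McNaughton f -> McNaughton g ->
  (forall y, inCube y -> (f y = 0 <-> conv_on A V y)) ->
  (forall y, inCube y -> (g y = 0 <-> conv V y)) ->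
  ~ in_principal X g f.
Proof.
move=> hXc hcl htan hV hScube hlam hCS hCF hFX hf hg hf0 hg0 [m [_ hle]].
have hu : orthonormal u := htan.1.
have xX : X x by case: htan => _ [xs [hX [hconv _]]]; exact: hcl hX hconv.
have xF : conv_on A V x.
  have xS : conv V x by rewrite -(Cpts_first x u lam); apply/hCS/vertex_in_conv.
  by case: (proj2 (hFX x) (conj xS xX)).
have [l0 hl0] := outgoing_vertex xF hCF.
have [_ [_ [psf hpsf]]] := hf; have [_ [_ [psg hpsg]]] := hg.
have pf : pieces_in (psf ++ psg) f.
  by move=> z /hpsf [p [hp ->]]; exists p; split => //; apply: List.in_or_app; left.
have pg : pieces_in (psf ++ psg) g.
  by move=> z /hpsg [p [hp ->]]; exists p; split => //; apply: List.in_or_app; right.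
have [B [ka [de [[hB hka hde] [HB Hka Hde]]]]] := piece_constants (psf ++ psg) u x.
have [lmin [lmax [hlmin hlmax lmin_le le_lmax]]] := lam_bounds hlam.
have [eps [[he0 he1 hel hell] [s1 s2 s3]]] := choose_eps K m hB hka hde hlmin hlmax.
have [y [yX hv]] := tangent_displacement htan he0 he1.
have y_cube := hXc y yX.
have fy := large_at_tangent_point hu hV hScube hlam hCS hf pf y_cube hv he0 he1 hB hka
             HB Hka Hde s1 s2 lmin_le le_lmax hel hell hf0 hl0.
have gy := small_at_tangent_point hu hScube hlam hCS hg pg y_cube hv he0 he1 hB hka
             HB Hka Hde s1 s2 lmin_le le_lmax hel hell hg0.
(* f(y) <= m g(y) <= m B eps c_l0 <= ka c_l0 / 4 < ka c_l0 / 2 <= f(y) *)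
set v := vsub y x in hv fy gy.
have [cpos _ ctail _] := hv.
have cK : dot v (u ord_max) <= dot v (u l0).
  by apply: (tail_mono cpos he1 ctail); rewrite -ltnS.
have gy_small : INR m * g y <= INR m * (B * eps * dot v (u l0)).
  apply: Rmult_le_compat_l; first exact: pos_INR.
  apply: Rle_trans gy _; rewrite -Rmult_assoc; apply: Rmult_le_compat_l => //.
  by apply: Rmult_le_pos; lra.
have := hle y yX; have := mvmul_le m (proj1 (proj1 hg y y_cube)).
have := Rmult_le_compat_r (dot v (u l0)) _ _ (Rlt_le _ _ (cpos l0)) s3.
have := Rmult_lt_0_compat _ _ hka (cpos l0).
lra.
Qed.

Theorem mainTheorem6 (n k : nat) (X : vec n -> Prop) (x : vec n) (u : 'I_k -> vec n)
  (d : nat) (V : 'I_d.+1 -> vec n) (A : 'I_d.+1 -> bool) (lam : 'I_k -> R)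
  (f g : vec n -> R) :
  ltn 0%nat k ->
  vsubset X (@inCube n) ->
  vclosed X ->
  k_tangent X u x ->
  rational_simplex V ->
  vsubset (conv V) (@inCube n) ->
  (exists j, A j = true) ->
  (forall l, 0 < lam l) ->
  vsubset (Cset x u lam) (conv V) ->
  ~ vsubset (Cset x u lam) (conv_on A V) ->
  (forall y, (conv_on A V y /\ X y) <-> (conv V y /\ X y)) ->
  McNaughton f -> McNaughton g ->
  (forall y, inCube y -> (f y = 0 <-> conv_on A V y)) ->
  (forall y, inCube y -> (g y = 0 <-> conv V y)) ->
  (forall y, X y -> (f y = 0 <-> g y = 0)) /\
  ~ in_principal X g f /\
  ~ strongly_semisimple X.
Proof.
move=> hk hXc hcl htan [_ hV] hScube _ hlam hCS hCF hFX hf hg hf0 hg0.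
(* f and g have the same zeros on X, because F and S meet X alike *)
have same_zeros : forall y, X y -> (f y = 0 <-> g y = 0).
  move=> y hy; have hc := hXc y hy; rewrite (hf0 y hc) (hg0 y hc).
  by split => h; [case: (proj1 (hFX y) (conj h hy)) | case: (proj2 (hFX y) (conj h hy))].
have not_dominated : ~ in_principal X g f.
  move: u lam htan hlam hCS hCF; case: k hk => // K _ u lam htan hlam hCS hCF.
  exact: (not_in_principal hXc hcl htan hV hScube hlam hCS hCF hFX hf hg hf0 hg0).
do 2 split => //.
(* the principal ideal of g would be cut out by zeros of g, hence contain f *)
move=> /(_ g hg) [Y [hYX hY]].
have g_zero_on_Y : forall y, Y y -> g y = 0.
  apply/(hY g hg); exists 1%nat; split => // y hy.
  have [h0 h1] := proj1 hg y (hXc y hy).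
  by rewrite /= /oplus Rplus_0_l Rmin_right //; lra.
apply: not_dominated; apply/(hY f hf) => y hy.
by apply/(same_zeros y (hYX y hy)); apply: g_zero_on_Y.
Qed.
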